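(* Let $\mathcal{E}^\infty$ denote the infinite prolongation of Pleba\'nski's second heavenly equation $$u_{xz}=u_{ty}+u_{yy}\,u_{zz}-u_{yz}^2$$ for a function $u(t,x,y,z)$, and let $\bar D_t,\bar D_x,\bar D_y,\bar D_z$ be the restrictions of the total derivatives $D_t,D_x,D_y,D_z$ to $\mathcal{E}^\infty$. On $\mathcal{E}^\infty\times\mathbb{R}^\infty$, with additional fibre coordinates $v_{i,j}$, $i,j\ge 0$ (where $v_{0,0}=v$, $v_{i,j}$ corresponds to $\partial^{i+j}v/\partial y^i\partial z^j$), define $$\widetilde D_y=\bar D_y+\sum_{i,j\ge0}v_{i+1,j}\frac{\partial}{\partial v_{i,j}},\qquad \widetilde D_z=\bar D_z+\sum_{i,j\ge0}v_{i,j+1}\frac{\partial}{\partial v_{i,j}},$$ $$\widetilde D_t=\bar D_t+\sum_{i,j\ge0}\widetilde D_y^{\,i}\widetilde D_z^{\,j}\big((u_{yz}+v_{0,0})\,v_{0,1}-u_{zz}\,v_{1,0}\big)\frac{\partial}{\partial v_{i,j}},$$ $$\widetilde D_x=\bar D_x+\sum_{i,j\ge0}\widetilde D_y^{\,i}\widetilde D_z^{\,j}\big(u_{yy}\,v_{0,1}-(u_{yz}-v_{0,0})\,v_{1,0}\big)\frac{\partial}{\partial v_{i,j}}.$$ Then the four vector fields $\widetilde D_t,\widetilde D_x,\widetilde D_y,\widetilde D_z$ pairwise commute; that is, the system $$v_t=(u_{yz}+v)\,v_z-u_{zz}\,v_y,\qquad v_x=u_{yy}\,v_z-(u_{yz}-v)\,v_y$$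 defines a differential covering (zero-curvature representation) of the second heavenly equation.
   Context: A differential covering of a PDE $\mathcal{E}$ with infinite prolongation $\mathcal{E}^\infty$ is given by extending the restricted total derivative operators $\bar D_t,\bar D_x,\bar D_y,\bar D_z$ to vector fields $\widetilde D_t,\widetilde D_x,\widetilde D_y,\widetilde D_z$ on $\mathcal{E}^\infty\times\mathbb{R}^\infty$ (new fibre coordinates) that project to the $\bar D$'s and commute pairwise; equivalently, the system of equations for the new dependent variable is compatible modulo $\mathcal{E}$ and its differential consequences. Here $u_{yz}$, $u_{yy}$, $u_{zz}$ denote the corresponding jet coordinates of second derivatives of $u$. *)

From HB Require Import structures.
From mathcomp Require Import all_boot all_order all_algebra.
From mathcomp Require Import reals.
Set Implicit Arguments. Unset Strict Implicit. Unset Printing Implicit Defensive.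
Import Order.TTheory GRing.Theory Num.Theory.
Local Open Scope ring_scope.

(** Fibre coordinates of J^oo(R^4,R) x R^oo.
    [U a b c d] is the jet coordinate u_{t^a x^b y^c z^d};
    [V i j] is the covering coordinate v_{i,j} (~ d^{i+j} v / dy^i dz^j). *)
Inductive jcoord : Type :=
  | U of nat & nat & nat & nat
  | V of nat & nat.

(** Polynomial expressions (integer coefficients) in finitely many coordinates:
    these are the functions on J^oo x R^oo needed here. *)
Inductive expr : Type :=
  | Cst of int
  | Var of jcoord
  | Add of expr & expr
  | Mul of expr & expr.

Definition Sub (e1 e2 : expr) : expr := Add e1 (Mul (Cst (-1)) e2).

Fixpoint eval (R : realType) (p : jcoord -> R) (e : expr) : R :=
  match e with
  | Cst z => z%:~R
  | Var c => p c
  | Add a b => eval p a + eval p b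
  | Mul a b => eval p a * eval p b
  end.

(** A vector field sum_c X(c) d/dc is given by its components X(c);
    [der X] is its action (as a derivation) on functions. *)
Definition vfield := jcoord -> expr.

Fixpoint der (X : vfield) (e : expr) : expr :=
  match e with
  | Cst _ => Cst 0
  | Var c => X c
  | Add a b => Add (der X a) (der X b)
  | Mul a b => Add (Mul (der X a) b) (Mul a (der X b))
  end.

Definition comm (X Y : vfield) : vfield :=
  fun c => Sub (der X (Y c)) (der Y (X c)).

Definition Dt : vfield := fun c =>
  match c with U a b c d => Var (U a.+1 b c d) | V _ _ => Cst 0 end.
Definition Dx : vfield := fun c =>
  match c with U a b c d => Var (U a b.+1 c d) | V _ _ => Cst 0 end.
Definition Dy : vfield := fun c =>
  match c with U a b c d => Var (U a b c.+1 d) | V _ _ => Cst 0 end.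
Definition Dz : vfield := fun c =>
  match c with U a b c d => Var (U a b c d.+1) | V _ _ => Cst 0 end.

Definition u_xz := Var (U 0 1 0 1).
Definition u_ty := Var (U 1 0 1 0).
Definition u_yy := Var (U 0 0 2 0).
Definition u_zz := Var (U 0 0 0 2).
Definition u_yz := Var (U 0 0 1 1).
Definition heavenlyF : expr :=
  Sub u_xz (Add u_ty (Sub (Mul u_yy u_zz) (Mul u_yz u_yz))).

(** E^oo x R^oo: the points of J^oo x R^oo at which all differential
    consequences D_t^a D_x^b D_y^c D_z^d F vanish. *)
Definition Einf (R : realType) (p : jcoord -> R) : Prop :=
  forall a b c d : nat,
    eval p (iter a (der Dt) (iter b (der Dx) (iter c (der Dy)
              (iter d (der Dz) heavenlyF)))) = 0.

(** The extended fields D~_y, D~_z (tangent to E^oo x R^oo, restricting to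
    the ones of the paper). *)
Definition Dty : vfield := fun c =>
  match c with U a b c d => Var (U a b c.+1 d) | V i j => Var (V i.+1 j) end.
Definition Dtz : vfield := fun c =>
  match c with U a b c d => Var (U a b c d.+1) | V i j => Var (V i j.+1) end.

Definition v0 := Var (V 0 0).
Definition v_y := Var (V 1 0).
Definition v_z := Var (V 0 1).

Definition f_t : expr := Sub (Mul (Add u_yz v0) v_z) (Mul u_zz v_y).
Definition f_x : expr := Sub (Mul u_yy v_z) (Mul (Sub u_yz v0) v_y).

Definition Dtt : vfield := fun c =>
  match c with
  | U a b c d => Var (U a.+1 b c d)
  | V i j => iter i (der Dty) (iter j (der Dtz) f_t)
  end.
Definition Dtx : vfield := fun c =>
  match c with
  | U a b c d => Var (U a b.+1 c d)
  | V i j => iter i (der Dty) (iter j (der Dtz) f_x)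
  end.

Inductive dir : Type := Tdir | Xdir | Ydir | Zdir.

Definition Dtilde (k : dir) : vfield :=
  match k with Tdir => Dtt | Xdir => Dtx | Ydir => Dty | Zdir => Dtz end.

(* The only bracket that needs the equation is [D~_t, D~_x]; the other ones vanish
   identically.  Since D~_t and D~_x commute with D~_y and D~_z, the v_{i,j}-component
   of [D~_t, D~_x] is D~_y^i D~_z^j (D~_t f_x - D~_x f_t), and a direct computation gives
   D~_t f_x - D~_x f_t = - v_z D_y F + v_y D_z F.  The expressions sum_k A_k D^{a_k} F form
   an ideal stable under D~_y and D~_z that vanishes on E^oo.  Derivations are applied
   to expressions syntactically; they respect equality of values because
   (der X e)(p) is the derivative at t = 0 of the polynomial t |-> e(p + t X(p)). *)
From Pilot Require Import Defs.
From mathcomp Require Import all_boot all_order all_algebra.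
From mathcomp Require Import reals.
From mathcomp Require Import ring.
Set Implicit Arguments. Unset Strict Implicit. Unset Printing Implicit Defensive.
Import Order.TTheory GRing.Theory Num.Theory.
Local Open Scope ring_scope.

Section HeavenlyCovering.
Variable R : realType.
Implicit Types (p q : jcoord -> R) (e : expr) (X Y : vfield).

Definition eqv e1 e2 := forall p : jcoord -> R, eval p e1 = eval p e2.

Lemma eqv_sym e1 e2 : eqv e1 e2 -> eqv e2 e1.
Proof. by move=> h p; rewrite h. Qed.

Lemma eqv_trans e1 e2 e3 : eqv e1 e2 -> eqv e2 e3 -> eqv e1 e3.
Proof. by move=> h1 h2 p; rewrite h1 h2. Qed.

Lemma eval_Sub p e1 e2 : eval p (Defs.Sub e1 e2) = eval p e1 - eval p e2.
Proof. by rewrite /= mulN1r. Qed.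

Lemma eval_ext p1 p2 e : p1 =1 p2 -> eval p1 e = eval p2 e.
Proof. by move=> h; elim: e => [z|c|a /= -> b ->|a /= -> b ->] /=. Qed.

Fixpoint eval_line p q e : {poly R} :=
  match e with
  | Cst z => (z%:~R)%:P
  | Var c => (p c)%:P + (q c)%:P * 'X
  | Add a b => eval_line p q a + eval_line p q b
  | Mul a b => eval_line p q a * eval_line p q b
  end.

Lemma horner_eval_line p q e t :
  (eval_line p q e).[t] = eval (fun c => p c + q c * t) e.
Proof.
by elim: e => /= [z|c|a IHa b IHb|a IHa b IHb]; rewrite ?hornerE ?IHa ?IHb.
Qed.

Lemma horner0_eval_line p q e : (eval_line p q e).[0] = eval p e.
Proof. by rewrite horner_eval_line; apply: eval_ext => c; rewrite mulr0 addr0. Qed.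

Lemma horner0_deriv_eval_line p X e :
  (eval_line p (fun c => eval p (X c)) e)^`().[0] = eval p (der X e).
Proof.
elim: e => /= [z|c|a IHa b IHb|a IHa b IHb].
- by rewrite derivC horner0.
- by rewrite !derivE !hornerE.
- by rewrite derivD hornerD IHa IHb.
- by rewrite derivM hornerD !hornerM IHa IHb !horner0_eval_line.
Qed.

Lemma poly_horner_inj (P Q : {poly R}) : (forall t, P.[t] = Q.[t]) -> P = Q.
Proof.
move=> PQ; apply/eqP; rewrite -subr_eq0; apply/eqP.
apply: (@roots_geq_poly_eq0 _ _ [seq i%:R | i <- iota 0 (size (P - Q))]).
- by apply/allP => x /mapP [i _ ->]; rewrite /root hornerD hornerN PQ subrr.
- by rewrite map_inj_uniq ?iota_uniq // => m n /eqP; rewrite eqr_nat => /eqP.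
- by rewrite size_map size_iota.
Qed.

Lemma der_eqv X e1 e2 : eqv e1 e2 -> eqv (der X e1) (der X e2).
Proof.
move=> e12 p; rewrite -!horner0_deriv_eval_line; congr (_^`().[0]).
by apply: poly_horner_inj => t; rewrite !horner_eval_line.
Qed.

Lemma iter_der_eqv X n e1 e2 :
  eqv e1 e2 -> eqv (iter n (der X) e1) (iter n (der X) e2).
Proof. by move=> e12; elim: n => //= n IH; apply: der_eqv. Qed.

Lemma iter_der_Sub X n e1 e2 :
  eqv (iter n (der X) (Defs.Sub e1 e2))
      (Defs.Sub (iter n (der X) e1) (iter n (der X) e2)).
Proof. by elim: n => [|n IH] p //=; rewrite (der_eqv X IH p) /=; ring. Qed.

Definition commute_at p X Y := forall c, eval p (comm X Y c) = 0.

Definition commutes X Y := forall p, commute_at p X Y.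

Lemma commute_at_refl p X : commute_at p X X.
Proof. by move=> c; rewrite eval_Sub subrr. Qed.

Lemma commute_at_sym p X Y : commute_at p X Y -> commute_at p Y X.
Proof. by move=> XY c; rewrite eval_Sub -opprB -eval_Sub XY oppr0. Qed.

Lemma eval_der_der p X Y e :
  eval p (der X (der Y e)) = eval p (der Y (der X e)) + eval p (der (comm X Y) e).
Proof. by elim: e => /= [z|c|a -> b ->|a -> b ->]; rewrite ?mulr0z; ring. Qed.

Lemma eval_der_commute_at p X Y e :
  commute_at p X Y -> eval p (der (comm X Y) e) = 0.
Proof.
move=> XY; elim: e => [z|c|a /= -> b ->|a /= -> b ->] //=.
- exact: XY.
- by rewrite addr0.
- by rewrite mul0r mulr0 addr0.
Qed.

Lemma der_iter_commute X Y n e : commutes X Y ->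
  eqv (der X (iter n (der Y) e)) (iter n (der Y) (der X e)).
Proof.
move=> XY; elim: n => //= n IH p.
by rewrite eval_der_der (eval_der_commute_at _ (XY p)) addr0 (der_eqv Y IH).
Qed.

Ltac commute_by_computation := move=> p [a b c d|i j]; rewrite eval_Sub /= ?subrr //; ring.

Lemma Dy_Dt_commute : commutes Dy Dt. Proof. commute_by_computation. Qed.
Lemma Dy_Dx_commute : commutes Dy Dx. Proof. commute_by_computation. Qed.
Lemma Dz_Dt_commute : commutes Dz Dt. Proof. commute_by_computation. Qed.
Lemma Dz_Dx_commute : commutes Dz Dx. Proof. commute_by_computation. Qed.
Lemma Dz_Dy_commute : commutes Dz Dy. Proof. commute_by_computation. Qed.
Lemma Dtz_Dty_commute : commutes Dtz Dty. Proof. commute_by_computation. Qed.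

Lemma Dtt_Dty_commute : commutes Dtt Dty. Proof. commute_by_computation. Qed.
Lemma Dtx_Dty_commute : commutes Dtx Dty. Proof. commute_by_computation. Qed.

Lemma Dtt_Dtz_commute : commutes Dtt Dtz.
Proof.
move=> p [a b c d|i j]; rewrite eval_Sub; first by rewrite /=; ring.
by rewrite /= -(der_iter_commute _ _ Dtz_Dty_commute) subrr.
Qed.

Lemma Dtx_Dtz_commute : commutes Dtx Dtz.
Proof.
move=> p [a b c d|i j]; rewrite eval_Sub; first by rewrite /=; ring.
by rewrite /= -(der_iter_commute _ _ Dtz_Dty_commute) subrr.
Qed.

Fixpoint v_free e : Prop :=
  match e with
  | Cst _ => True
  | Var (U _ _ _ _) => True
  | Var (V _ _) => False
  | Add a b | Mul a b => v_free a /\ v_free b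
  end.

Definition jet_field X := forall a b c d, v_free (X (U a b c d)).

Lemma v_free_der X e : jet_field X -> v_free e -> v_free (der X e).
Proof.
move=> hX; elim: e => [z|[a b c d|i j]|a IHa b IHb|a IHa b IHb] //=.
- by case=> /IHa ? /IHb.
- by case=> ha hb; split; split => //; [exact: IHa | exact: IHb].
Qed.

Lemma v_free_iter_der X n e : jet_field X -> v_free e -> v_free (iter n (der X) e).
Proof. by move=> hX he; elim: n => //= n IH; apply: v_free_der. Qed.

Lemma der_v_free X Y e : (forall a b c d, X (U a b c d) = Y (U a b c d)) ->
  v_free e -> der X e = der Y e.
Proof.
move=> XY; elim: e => [z|[a b c d|i j]|a IHa b IHb|a IHa b IHb] //=;
  by case=> /IHa -> /IHb ->.
Qed.

Definition heavenly_consequence a b c d :=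
  iter a (der Dt) (iter b (der Dx) (iter c (der Dy) (iter d (der Dz) heavenlyF))).

Lemma v_free_heavenly_consequence a b c d : v_free (heavenly_consequence a b c d).
Proof. by do 4 (apply: v_free_iter_der; first by []). Qed.

Lemma Dty_heavenly_consequence a b c d :
  eqv (der Dty (heavenly_consequence a b c d)) (heavenly_consequence a b c.+1 d).
Proof.
rewrite (@der_v_free _ Dy) //; last exact: v_free_heavenly_consequence.
apply: eqv_trans; first exact: der_iter_commute Dy_Dt_commute.
apply: iter_der_eqv; apply: eqv_trans; first exact: der_iter_commute Dy_Dx_commute.
exact: iter_der_eqv.
Qed.

Lemma Dtz_heavenly_consequence a b c d :
  eqv (der Dtz (heavenly_consequence a b c d)) (heavenly_consequence a b c d.+1).
Proof.
rewrite (@der_v_free _ Dz) //; last exact: v_free_heavenly_consequence.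
apply: eqv_trans; first exact: der_iter_commute Dz_Dt_commute.
apply: iter_der_eqv; apply: eqv_trans; first exact: der_iter_commute Dz_Dx_commute.
apply: iter_der_eqv; apply: eqv_trans; first exact: der_iter_commute Dz_Dy_commute.
exact: iter_der_eqv.
Qed.

Inductive heavenly_ideal : expr -> Prop :=
  | heavenly_ideal_mul A a b c d : heavenly_ideal (Mul A (heavenly_consequence a b c d))
  | heavenly_ideal_add e1 e2 :
      heavenly_ideal e1 -> heavenly_ideal e2 -> heavenly_ideal (Add e1 e2)
  | heavenly_ideal_eqv e1 e2 : heavenly_ideal e1 -> eqv e1 e2 -> heavenly_ideal e2.

Lemma heavenly_ideal_Einf p e : Einf p -> heavenly_ideal e -> eval p e = 0.
Proof.
move=> Ep; elim=> [A a b c d|e1 e2 _ h1 _ h2|e1 e2 _ h1 h2].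
- by rewrite /= Ep mulr0.
- by rewrite /= h1 h2 addr0.
- by rewrite -(h2 p).
Qed.

Lemma heavenly_ideal_der X :
  (forall a b c d, exists a' b' c' d',
     eqv (der X (heavenly_consequence a b c d)) (heavenly_consequence a' b' c' d')) ->
  forall e, heavenly_ideal e -> heavenly_ideal (der X e).
Proof.
move=> hX e; elim=> [A a b c d|e1 e2 _ h1 _ h2|e1 e2 _ h1 h2] /=.
- apply: heavenly_ideal_add; first exact: heavenly_ideal_mul.
  have [a' [b' [c' [d' XG]]]] := hX a b c d.
  apply: heavenly_ideal_eqv (heavenly_ideal_mul A a' b' c' d') _.
  by move=> p /=; rewrite XG.
- exact: heavenly_ideal_add.
- exact: heavenly_ideal_eqv h1 (der_eqv X h2).
Qed.

Lemma heavenly_ideal_iter_Dty_Dtz m n e :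
  heavenly_ideal e -> heavenly_ideal (iter m (der Dty) (iter n (der Dtz) e)).
Proof.
move=> he; elim: m => [|m IHm] /=.
- elim: n => //= n IHn; apply: heavenly_ideal_der IHn => a b c d.
  by exists a, b, c, d.+1; apply: Dtz_heavenly_consequence.
- apply: heavenly_ideal_der IHm => a b c d.
  by exists a, b, c.+1, d; apply: Dty_heavenly_consequence.
Qed.

Lemma Dtt_f_x_sub_Dtx_f_t :
  eqv (Defs.Sub (der Dtt f_x) (der Dtx f_t))
      (Add (Mul (Mul (Cst (-1)) v_z) (heavenly_consequence 0 0 1 0))
           (Mul v_y (heavenly_consequence 0 0 0 1))).
Proof. by move=> p /=; ring. Qed.

Lemma Dtt_Dtx_commute_at p : Einf p -> commute_at p Dtt Dtx.
Proof.
move=> Ep [a b c d|i j]; rewrite eval_Sub; first by rewrite /=; ring.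
have Dtt_f_x_sub_Dtx_f_t_ideal : heavenly_ideal (Defs.Sub (der Dtt f_x) (der Dtx f_t)).
  apply: heavenly_ideal_eqv (eqv_sym Dtt_f_x_sub_Dtx_f_t).
  by apply: heavenly_ideal_add; apply: heavenly_ideal_mul.
rewrite /= (der_iter_commute _ _ Dtt_Dty_commute) (der_iter_commute _ _ Dtx_Dty_commute).
rewrite (iter_der_eqv _ _ (der_iter_commute _ _ Dtt_Dtz_commute)).
rewrite (iter_der_eqv _ _ (der_iter_commute _ _ Dtx_Dtz_commute)).
rewrite -eval_Sub -iter_der_Sub -(iter_der_eqv _ _ (iter_der_Sub _ _ _ _)).
exact/(heavenly_ideal_Einf Ep)/heavenly_ideal_iter_Dty_Dtz.
Qed.

End HeavenlyCovering.

Theorem mainTheorem1 (R : realType) (k l : dir) (c : jcoord) (p : jcoord -> R) :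
  Einf p -> eval p (comm (Dtilde k) (Dtilde l) c) = 0.
Proof.
move=> Ep; suff kl : commute_at p (Dtilde k) (Dtilde l) by exact: kl.
have TX := Dtt_Dtx_commute_at Ep.
have TY := Dtt_Dty_commute p; have XY := Dtx_Dty_commute p.
have TZ := Dtt_Dtz_commute p; have XZ := Dtx_Dtz_commute p.
have ZY := Dtz_Dty_commute p.
case: k; case: l => /=; by [apply: commute_at_refl | apply: commute_at_sym | ].
Qed.
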